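(* Let $\mathbf{W}=\langle W;\to,\neg,{}^{+},{}^{-},1\rangle$ be a quasi-Wajsberg* algebra and $0:=1\to 1$. Then: (1) $0\to 1=1$ and $0\to\neg 1=\neg 1$; (2) $1\to 0=\neg 1$ and $\neg 1\to 0=1$; (3) $\neg 1\to 1=1$ and $1\to\neg 1=\neg 1$; (4) $0^{+}=0=0^{-}$, $1^{+}=1$, $(\neg 1)^{-}=\neg 1$; (5) $1^{-}=0=(\neg 1)^{+}$.
   Context: A quasi-Wajsberg* algebra is an algebra $\langle W;\to,\neg,{}^{+},{}^{-},1\rangle$ of type $\langle2,1,1,1,0\rangle$ such that for all $x,y,z\in W$: (QW*1) $x\to y=\neg y\to\neg x$; (QW*2) $(x\to 1)\to((y\to 1)\to z)=(y\to 1)\to((x\to 1)\to z)$; (QW*3) $(1\to x)\to 1=1$; (QW*4) $(z\to z)\to(x\to y)=x\to y$; (QW*5) $(1\to 1)\to x^{+}=((1\to 1)\to x)^{+}=(x\to 1)\to 1$ and $(1\to 1)\to x^{-}=((1\to 1)\to x)^{-}=(x\to\neg 1)\to\neg 1$; (QW*6) $x\to y=(y^{+}\to x^{-})\to(x^{+}\to y^{-})$; (QW*7) $\neg(x\to y)=y\to x$; (QW*8) $\neg\neg x=x$; (QW*9) $(x\to(\neg x\to y))^{+}=x^{+}\to(\neg x^{+}\to y^{+})$; (QW*10) $x\vee y=y\vee x$; (QW*11) $x\vee(y\vee z)=(x\vee y)\vee z$; (QW*12) $x\to(y\vee z)=(x\to y)\vee(x\to z)$; where $x\vee y:=((x^{+}\to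 y^{+})^{+}\to(\neg x)^{-})\to((y^{-}\to x^{-})^{-}\to x^{-})$. Conventions: ${}^+,{}^-$ bind tighter than $\neg$, which binds tighter than $\to$. *)

Section QW.
Variables (W : Type) (imp : W -> W -> W) (neg : W -> W)
          (pl mi : W -> W) (one : W).

Definition qw_join (x y : W) : W :=
  imp (imp (pl (imp (pl x) (pl y))) (mi (neg x)))
      (imp (mi (imp (mi y) (mi x))) (mi x)).

Definition is_quasi_wajsberg_star : Prop :=
  (forall x y, imp x y = imp (neg y) (neg x)) /\                       (* QW*1 *)
  (forall x y z, imp (imp x one) (imp (imp y one) z)
               = imp (imp y one) (imp (imp x one) z)) /\               (* QW*2 *)
  (forall x, imp (imp one x) one = one) /\                             (* QW*3 *)
  (forall x y z, imp (imp z z) (imp x y) = imp x y) /\                 (* QW*4 *)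
  (forall x, imp (imp one one) (pl x) = pl (imp (imp one one) x) /\
             pl (imp (imp one one) x) = imp (imp x one) one) /\
  (forall x, imp (imp one one) (mi x) = mi (imp (imp one one) x) /\
             mi (imp (imp one one) x) = imp (imp x (neg one)) (neg one)) /\ (* QW*5 *)
  (forall x y, imp x y = imp (imp (pl y) (mi x)) (imp (pl x) (mi y))) /\ (* QW*6 *)
  (forall x y, neg (imp x y) = imp y x) /\                             (* QW*7 *)
  (forall x, neg (neg x) = x) /\                                       (* QW*8 *)
  (forall x y, pl (imp x (imp (neg x) y))
             = imp (pl x) (imp (neg (pl x)) (pl y))) /\                (* QW*9 *)
  (forall x y, qw_join x y = qw_join y x) /\                           (* QW*10 *)
  (forall x y z, qw_join x (qw_join y z) = qw_join (qw_join x y) z) /\ (* QW*11 *)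
  (forall x y z, imp x (qw_join y z)
               = qw_join (imp x y) (imp x z)).                         (* QW*12 *)
End QW.


(* With 0 := 1 -> 1, QW*7 gives ¬0 = 0 and ¬(x -> y) = y -> x, so together
   with QW*1, QW*3 and QW*8 every implication between 0, 1 and ¬1 reduces to a
   known one.  The second halves of QW*5 then evaluate x^+ and x^- on elements
   of the form 0 -> x, and each of 0, 1, ¬1 has this form by (1) and QW*4. *)

Set Implicit Arguments.
Unset Strict Implicit.

Section ZeroOneNegOne.

Variables (W : Type) (imp : W -> W -> W) (neg : W -> W) (pl mi : W -> W)
          (one : W).

Local Notation zero := (imp one one).

Hypothesis imp_contra : forall x y, imp x y = imp (neg y) (neg x).
Hypothesis imp_from_one_one : forall x, imp (imp one x) one = one.
Hypothesis imp_refl_l : forall x y z, imp (imp z z) (imp x y) = imp x y.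
Hypothesis pl_zero_imp : forall x, pl (imp zero x) = imp (imp x one) one.
Hypothesis mi_zero_imp :
  forall x, mi (imp zero x) = imp (imp x (neg one)) (neg one).
Hypothesis neg_imp : forall x y, neg (imp x y) = imp y x.
Hypothesis negK : forall x, neg (neg x) = x.

Lemma neg_zero : neg zero = zero.
Proof. apply neg_imp. Qed.

Lemma imp_zero_zero : imp zero zero = zero.
Proof. apply imp_refl_l. Qed.

Lemma imp_neg_one_neg_one : imp (neg one) (neg one) = zero.
Proof. symmetry; apply imp_contra. Qed.

Lemma imp_zero_one : imp zero one = one.
Proof. apply imp_from_one_one. Qed.

Lemma imp_one_zero : imp one zero = neg one.
Proof. now rewrite <- neg_imp, imp_zero_one. Qed.

Lemma imp_zero_neg_one : imp zero (neg one) = neg one.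
Proof. now rewrite imp_contra, negK, neg_zero, imp_one_zero. Qed.

Lemma imp_neg_one_zero : imp (neg one) zero = one.
Proof. now rewrite imp_contra, negK, neg_zero, imp_zero_one. Qed.

Lemma imp_neg_one_one : imp (neg one) one = one.
Proof. rewrite <- imp_one_zero; apply imp_from_one_one. Qed.

Lemma imp_one_neg_one : imp one (neg one) = neg one.
Proof. now rewrite <- neg_imp, imp_neg_one_one. Qed.

Lemma pl_one : pl one = one.
Proof. now generalize (pl_zero_imp one); rewrite imp_zero_one. Qed.

Lemma pl_zero : pl zero = zero.
Proof. now generalize (pl_zero_imp zero); rewrite imp_zero_zero, imp_zero_one. Qed.

Lemma mi_zero : mi zero = zero.
Proof.
  generalize (mi_zero_imp zero).
  now rewrite imp_zero_zero, imp_zero_neg_one, imp_neg_one_neg_one.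
Qed.

Lemma mi_one : mi one = zero.
Proof.
  generalize (mi_zero_imp one).
  now rewrite imp_zero_one, imp_one_neg_one, imp_neg_one_neg_one.
Qed.

Lemma pl_neg_one : pl (neg one) = zero.
Proof.
  generalize (pl_zero_imp (neg one)).
  now rewrite imp_zero_neg_one, imp_neg_one_one.
Qed.

Lemma mi_neg_one : mi (neg one) = neg one.
Proof.
  generalize (mi_zero_imp (neg one)).
  now rewrite imp_zero_neg_one, imp_neg_one_neg_one, imp_zero_neg_one.
Qed.

Lemma zero_one_neg_one_table :
  (imp zero one = one /\ imp zero (neg one) = neg one) /\
  (imp one zero = neg one /\ imp (neg one) zero = one) /\
  (imp (neg one) one = one /\ imp one (neg one) = neg one) /\
  (pl zero = zero /\ zero = mi zero /\ pl one = one /\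
   mi (neg one) = neg one) /\
  (mi one = zero /\ zero = pl (neg one)).
Proof.
  repeat split; auto using imp_zero_one, imp_zero_neg_one, imp_one_zero,
    imp_neg_one_zero, imp_neg_one_one, imp_one_neg_one, pl_zero, pl_one,
    mi_neg_one, mi_one.
  - now rewrite mi_zero.
  - now rewrite pl_neg_one.
Qed.

End ZeroOneNegOne.

Theorem proposition3p2 (W : Type) (imp : W -> W -> W) (neg : W -> W)
  (pl mi : W -> W) (one : W) :
  is_quasi_wajsberg_star W imp neg pl mi one ->
  let zero := imp one one in
  (* (1) *) (imp zero one = one /\ imp zero (neg one) = neg one) /\
  (* (2) *) (imp one zero = neg one /\ imp (neg one) zero = one) /\
  (* (3) *) (imp (neg one) one = one /\ imp one (neg one) = neg one) /\
  (* (4) *) (pl zero = zero /\ zero = mi zero /\ pl one = one /\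
             mi (neg one) = neg one) /\
  (* (5) *) (mi one = zero /\ zero = pl (neg one)).
Proof.
  intros (contra & _ & from_one & refl_l & Hpl & Hmi & _ & nimp & nK & _) zero.
  exact (zero_one_neg_one_table contra from_one refl_l
           (fun x => proj2 (Hpl x)) (fun x => proj2 (Hmi x)) nimp nK).
Qed.
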